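(* Let $k$, $a$, $b$, $\ell$ be positive integers with $k = a\ell$ and $a \le b$. Let $P = b\ast[0,\ell-1] = \{0,b,2b,\ldots,(\ell-1)b\}$ and \[ A = P + [0,a-1] = \bigcup_{j=1}^{\ell}\big((j-1)b + [0,a-1]\big). \] Then $|A| = k$. Moreover, for every positive integer $h$, letting $Q = b\ast[0,h(\ell-1)] = \{0,b,2b,\ldots,h(\ell-1)b\}$, we have \[ hA = Q + [0,h(a-1)] \] and \[ |hA| = \begin{cases} (a + b(\ell-1) - 1)h + 1 & \text{if } a \le b \le (a-1)h+1, \\ (a-1)(\ell-1)h^2 + (a+\ell-2)h + 1 & \text{if } b \ge h(a-1)+1. \end{cases} \]
   Context: For real numbers $u,v$, the integer interval $[u,v]$ denotes $\{n \in \mathbf{Z} : u \le n \le v\}$. For a set $X$ of integers and an integer $\lambda$, $\lambda\ast X = \{\lambda x : x \in X\}$; for sets $X,Y$, $X+Y = \{x+y : x\in X, y \in Y\}$. For a positive integer $h$ and a finite set $A$ of integers, the $h$-fold sumset $hA$ is the set of all sums $a_1+\cdots+a_h$ with $a_1,\ldots,a_h \in A$ (not necessarily distinct). *)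

From HB Require Import structures.
From mathcomp Require Import all_boot all_order all_algebra.
From mathcomp Require Import finmap.
Set Implicit Arguments. Unset Strict Implicit. Unset Printing Implicit Defensive.
Import Order.TTheory GRing.Theory Num.Theory.
Local Open Scope ring_scope.
Local Open Scope fset_scope.

Definition iint (u v : int) : {fset int} :=
  [fset x in [seq (u + i%:Z)%R | i <- iota 0 `|(v - u + 1)%R|%N] | ((u <= x) && (x <= v))%R].

Definition dilate (lam : int) (X : {fset int}) : {fset int} :=
  [fset (lam * x)%R | x in X].

Definition sumset (X Y : {fset int}) : {fset int} :=
  [fset (x + y)%R | x in X, y in Y].

Definition hfold (h : nat) (A : {fset int}) : {fset int} :=
  [fset (\sum_(i < h) val (f i))%R | f : {ffun 'I_h -> A} in {: {ffun 'I_h -> A}}].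

From HB Require Import structures.
From mathcomp Require Import all_boot all_order all_algebra.
From mathcomp Require Import finmap zify.
Import Order.TTheory GRing.Theory Num.Theory.
Local Open Scope fset_scope.

(* Writing every element of [b * [0, M] + [0, N]] as [b j + r] with [j <= M],
   [r <= N], an h-fold sum is [b (j_1 + ... + j_h) + (r_1 + ... + r_h)], and
   every pair [J <= h M], [R <= h N] splits into such coordinates; hence [hA] is
   again of this shape, with [M, N] replaced by [h M, h N].  Counting: if
   [N < b] the representation [b j + r] is unique (Euclidean division), so there
   are [(M + 1)(N + 1)] elements; if [b <= N + 1] consecutive blocks overlap or
   touch, so the set is the whole interval [[0, b M + N]]. *)

Section Blocks.
Local Open Scope ring_scope.

Definition blocks (b M N : nat) : {fset int} :=
  sumset (dilate b%:Z (iint 0 M%:Z)) (iint 0 N%:Z).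

Lemma in_iint (u v x : int) : (x \in iint u v) = (u <= x <= v).
Proof.
rewrite /iint !inE andbC; have [/andP[ux xv]|//] := boolP (u <= x <= v).
by apply/mapP; exists `|x - u|%N; [rewrite mem_iota | ]; lia.
Qed.

Lemma sumsetP (X Y : {fset int}) (x : int) :
  reflect (exists2 y, y \in X & exists2 z, z \in Y & x = y + z) (x \in sumset X Y).
Proof. exact: imfset2P. Qed.

Lemma blocksP (b M N : nat) (x : int) :
  reflect (exists j r : nat, [/\ j <= M, r <= N & x = (b * j + r)%N%:Z]%N)
          (x \in blocks b M N).
Proof.
apply: (iffP (sumsetP _ _ _)) => [[_ /imfsetP[j jM ->] [r rN ->]] | [j [r [jM rN ->]]]].
  move: jM rN; rewrite !in_iint => jM rN.
  by exists `|j|%N, `|r|%N; split; lia.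
exists (b%:Z * j%:Z); first by apply/imfsetP; exists j%:Z; rewrite ?in_iint; lia.
by exists r%:Z; rewrite ?in_iint; lia.
Qed.

Lemma card_fset_nat_seq (X : {fset int}) (s : seq nat) : uniq s ->
  (forall x, x \in X <-> exists2 n, n \in s & x = n%:Z) -> #|` X| = size s.
Proof.
move=> s_uniq memX; have -> : X = [fset x in map Posz s].
  apply/fsetP => x; rewrite inE; apply/idP/mapP; first by case/memX => n; exists n.
  by case=> n sn ->; apply/memX; exists n.
by rewrite card_fseq undup_id ?size_map // map_inj_uniq // => ? ? [].
Qed.

Lemma card_blocks_disjoint (b M N : nat) : (N < b)%N ->
  #|` blocks b M N| = (M.+1 * N.+1)%N.
Proof.
move=> ltNb; pose digits := [seq (b * j + r)%N | j <- iota 0 M.+1, r <- iota 0 N.+1].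
have edivP j r : (r < b)%N -> ((b * j + r) %/ b = j /\ (b * j + r) %% b = r)%N.
  by move=> ltrb; rewrite mulnC divnMDl ?modnMDl ?divn_small ?modn_small //; lia.
rewrite (@card_fset_nat_seq _ digits) ?size_allpairs ?size_iota //.
  apply: allpairs_uniq; rewrite ?iota_uniq // => p1 p2.
  case/allpairsP=> -[j1 r1] [_ r1N ->]; case/allpairsP=> -[j2 r2] [_ r2N ->] /= E.
  rewrite !mem_iota /= in r1N r2N.
  have [q1 m1] := edivP j1 r1 ltac:(lia); have [q2 m2] := edivP j2 r2 ltac:(lia).
  by congr pair; [rewrite -q1 E q2 | rewrite -m1 E m2].
move=> x; split.
  case/blocksP=> j [r [jM rN ->]]; exists (b * j + r)%N => //.
  by apply/allpairsP; exists (j, r); rewrite !mem_iota; split => //; lia.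
case=> _ /allpairsP[[j r] [/[!mem_iota] jM rN -> ->]].
by apply/blocksP; exists j, r; split => //; lia.
Qed.

Lemma card_iint0 (n : nat) : #|` iint 0 n%:Z| = n.+1.
Proof.
rewrite -(size_iota 0 n.+1); apply: card_fset_nat_seq; rewrite ?iota_uniq // => x.
rewrite in_iint; split => [xn | [m /[!mem_iota] mn ->]]; last by lia.
by exists `|x|%N; rewrite ?mem_iota; lia.
Qed.

Lemma blocks_interval (b M N : nat) : (0 < b)%N -> (b <= N.+1)%N ->
  blocks b M N = iint 0 (b * M + N)%N%:Z.
Proof.
move=> b_gt0 leb; apply/fsetP => x; rewrite in_iint.
apply/blocksP/idP => [[j [r [jM rN ->]]] | ]; first by nia.
case: x => [n | //] /= len.
have nE := divn_eq n b; have ltnb := ltn_pmod n b_gt0.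
have [qM | Mq] := leqP (n %/ b) M.
  by exists (n %/ b)%N, (n %% b)%N; split; lia.
have leMn : (M.+1 * b <= n)%N by rewrite -leq_divRL.
by exists M, (n - b * M)%N; split; nia.
Qed.

Lemma exists_bounded_summands [h m J : nat] : (J <= h * m)%N ->
  exists g : nat -> nat, (forall i, g i <= m)%N /\ (\sum_(i < h) g i)%N = J.
Proof.
elim: h J => [|h IH] J leJ.
  by exists (fun=> 0%N); split => //; rewrite big_ord0; lia.
have [g [g_le g_sum]] := IH (J - minn J m)%N ltac:(lia).
exists (fun i => if i == h then minn J m else g i); split.
  by move=> i; case: eqP => _ //; lia.
rewrite big_ord_recr /= eqxx (eq_bigr (fun i : 'I_h => g i)) ?g_sum; first by lia.
by move=> i _; rewrite ltn_eqF.
Qed.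

Lemma Posz_sum (h : nat) (F : 'I_h -> nat) :
  (\sum_(i < h) F i)%N%:Z = \sum_(i < h) (F i)%:Z.
Proof. by rewrite -natz natr_sum; under eq_bigr do rewrite natz. Qed.

Lemma hfold_blocks_sub (b M N h : nat) :
  hfold h (blocks b M N) `<=` blocks b (h * M) (h * N).
Proof.
apply/fsubsetP => _ /imfsetP[f _ ->].
have /fin_all_exists[c cP] : forall i, exists c : nat * nat,
    [/\ c.1 <= M, c.2 <= N & val (f i) = (b * c.1 + c.2)%N%:Z]%N.
  by move=> i; case/blocksP: (valP (f i)) => j [r [jM rN ->]]; exists (j, r).
have sum_le (F : 'I_h -> nat) m : (forall i, F i <= m)%N -> (\sum_i F i <= h * m)%N.
  move=> Fm; apply: (@leq_trans (\sum_(i < h) m)%N); first exact: leq_sum.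
  by rewrite sum_nat_const card_ord.
apply/blocksP; exists (\sum_i (c i).1)%N, (\sum_i (c i).2)%N; split.
- by apply: sum_le => i; case: (cP i).
- by apply: sum_le => i; case: (cP i).
rewrite (eq_bigr (fun i => (b * (c i).1 + (c i).2)%N%:Z)) => [|i _]; last by case: (cP i).
by rewrite -Posz_sum big_split /= big_distrr.
Qed.

Lemma blocks_sub_hfold (b M N h : nat) :
  blocks b (h * M) (h * N) `<=` hfold h (blocks b M N).
Proof.
apply/fsubsetP => _ /blocksP[J [R [JM RN ->]]].
have [g [gM gJ]] := exists_bounded_summands JM.
have [s [sN sR]] := exists_bounded_summands RN.
have mem_gs (i : 'I_h) : (b * g i + s i)%N%:Z \in blocks b M N.
  by apply/blocksP; exists (g i), (s i).
apply/imfsetP; exists [ffun i => [` mem_gs i]] => //.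
rewrite (eq_bigr (fun i : 'I_h => (b * g i + s i)%N%:Z)) => [|i _]; last by rewrite ffunE.
by rewrite -Posz_sum big_split /= -big_distrr gJ sR.
Qed.

Lemma hfold_blocks (b M N h : nat) :
  hfold h (blocks b M N) = blocks b (h * M) (h * N).
Proof. by apply/eqP; rewrite eqEfsubset hfold_blocks_sub blocks_sub_hfold. Qed.

End Blocks.

Theorem mainTheorem2 (k a b l : nat) :
  (0 < k)%N -> (0 < a)%N -> (0 < b)%N -> (0 < l)%N ->
  k = (a * l)%N -> (a <= b)%N ->
  let P := dilate (b%:Z) (iint 0 (l%:Z - 1)%R) in
  let A := sumset P (iint 0 (a%:Z - 1)%R) in
  #|` A| = k /\
  (forall h : nat, (0 < h)%N ->
     let Q := dilate (b%:Z) (iint 0 (h%:Z * (l%:Z - 1))%R) in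
     hfold h A = sumset Q (iint 0 (h%:Z * (a%:Z - 1))%R) /\
     ((a <= b <= (a - 1) * h + 1)%N ->
        #|` hfold h A| = ((a + b * (l - 1) - 1) * h + 1)%N) /\
     ((h * (a - 1) + 1 <= b)%N ->
        #|` hfold h A| = ((a - 1) * (l - 1) * h ^ 2 + (a + l - 2) * h + 1)%N)).
Proof.
move=> _ a_gt0 b_gt0 l_gt0 -> leab P A.
have -> : A = blocks b (l - 1) (a - 1).
  by rewrite /A /P /blocks; congr (sumset (dilate _ (iint _ _)) (iint _ _)); lia.
split; first by rewrite card_blocks_disjoint; nia.
move=> h h_gt0 Q; rewrite hfold_blocks.
split; first by rewrite /Q /blocks; congr (sumset (dilate _ (iint _ _)) (iint _ _)); nia.
split => [/andP[_ small_b] | large_b].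
  by rewrite blocks_interval ?card_iint0; nia.
by rewrite card_blocks_disjoint; nia.
Qed.
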